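(* Let $\arctan$ denote the principal branch of the inverse tangent on $\mathbb{C}\setminus\big((-i\infty,-i]\cup[i,i\infty)\big)$ with $\arctan 0=0$. For every $n\in\mathbb{N}$ and every $z$ in this domain with $z\neq0$, \[ (\arctan z)^{(n)}=\frac{(n-1)!}{(2z)^{n-1}}\sum_{k=0}^{n-1}(-1)^k\binom{k}{n-k-1}\frac{(2z)^{2k}}{(1+z^2)^{k+1}}. \] Moreover, \[ \frac{\arctan z}{z}=\sum_{n=0}^{\infty}(-1)^n\Big[\frac{\pi}{4}+T(n)\Big](z-1)^n,\qquad |z-1|<\sqrt2, \] where $T(0)=0$ and $T(n)=\sum_{k=1}^{n}\frac{(-1)^k}{2^{k/2}k}\sin\frac{3k\pi}{4}$ for $n\ge1$.
   Context: Ordinary binomial coefficients, with $\binom{k}{j}=0$ if $j>k$. *)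

From Stdlib Require Import Reals.
From Coquelicot Require Import Coquelicot.
Open Scope R_scope.

(* ordinary binomial coefficient on nat, with binom k j = 0 when j > k *)
Fixpoint binom (n k : nat) : nat :=
  match n, k with
  | _, O => 1%nat
  | O, S _ => 0%nat
  | S n', S k' => (binom n' k' + binom n' k)%nat
  end.

(* principal argument in (-PI, PI] (arbitrary value 0-ish at z = 0) *)
Definition Carg (z : C) : R :=
  if Rle_dec 0 (Im z) then acos (Re z / Cmod z) else - acos (Re z / Cmod z).

Definition Clog (z : C) : C := (ln (Cmod z), Carg z).

Definition Catan (z : C) : C :=
  (Ci / 2 * (Clog (1 - Ci * z) - Clog (1 + Ci * z)))%C.

Definition atan_dom (z : C) : Prop := ~ (Re z = 0 /\ 1 <= Rabs (Im z)).

Definition is_nth_cderive (D : C -> Prop) (f : C -> C) (n : nat) (z v : C) : Prop :=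
  exists g : nat -> C -> C,
    (forall w, D w -> g O w = f w) /\
    (forall k w, D w -> is_derive (g k) w (g (S k) w)) /\
    g n z = v.

Fixpoint T (n : nat) : R :=
  match n with
  | O => 0
  | S m => T m + (-1) ^ (S m) / (Rpower 2 (INR (S m) / 2) * INR (S m))
                 * sin (3 * INR (S m) * PI / 4)
  end.

(* arctan z / z, extended by continuity (value 1) at the removable point 0 *)
Definition atan_over (z : C) : C := if Ceq_dec z 0 then 1%C else (Catan z / z)%C.

From Stdlib Require Import Reals Lra Lia.
From Coquelicot Require Import Coquelicot.
Open Scope R_scope.

(* On the slit domain [Catan' z = 1 / (1 + z^2) = (i/2) (1 / (z + i) - 1 / (z - i))], so the
   n-th derivative is [(n-1)! (-1)^(n-1) (i/2) (x^n - y^n)] with [x = 1 / (z + i)],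
   [y = 1 / (z - i)].  Since [x + y = 2 z x y], the binomial sum of the statement is the
   classical expansion of the Lucas sequence [(x^n - y^n) / (x - y)] in [x + y] and [x y].

   For the series put [w = z - 1].  The partial fractions
   [1 / (1 + (1 + w)^2) = (i/2) (conj omega / (1 - w conj omega) - omega / (1 - w omega))],
   [omega = e^(3 i PI / 4) / sqrt 2], expand geometrically for [|w| < sqrt 2], and the mean value
   inequality along [[0, w]] turns this into [Catan (1 + w) = PI/4 + sum_k Im (omega^k) w^k / k]
   with a geometric remainder.  Dividing by [1 + w = z] makes the coefficients the alternating
   partial sums [(-1)^n (PI/4 + T n)]; at [z = 0], where [1 + w] vanishes, a summation by parts
   reduces the claim to [Catan' 0 = 1]. *)

(** * Complex differentiation *)

Notation is_Cderive := (@is_derive C_AbsRing C_NormedModule).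

Lemma is_Cderive_spec (f : C -> C) (x l : C) :
  is_Cderive f x l <->
  forall eps, 0 < eps -> exists delta, 0 < delta /\
    forall y, Cmod (y - x) < delta -> Cmod (f y - f x - (y - x) * l) <= eps * Cmod (y - x).
Proof.
  split.
  - intros [_ Hf] eps Heps.
    destruct (Hf x (fun P HP => HP) (mkposreal eps Heps)) as [[delta Hdelta] Hball].
    exists delta. split; [exact Hdelta | exact Hball].
  - intros Hf. split; [apply is_linear_scal_l |].
    intros x' Hx'.
    apply (is_filter_lim_locally_unique (K := C_AbsRing) (V := AbsRing_NormedModule C_AbsRing))
      in Hx'.
    subst x'. intros [eps Heps]. destruct (Hf eps Heps) as [delta [Hdelta Hball]].
    exists (mkposreal delta Hdelta). exact Hball.
Qed.

(* Coquelicot's [is_derive_id], [is_derive_mult] and [is_derive_comp] are stated for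
   [AbsRing_NormedModule C_AbsRing], a normed-module structure on [C] distinct from
   [C_NormedModule]. *)
Lemma is_Cderive_K (f : C -> C) (x l : C) :
  is_Cderive f x l <-> @is_derive C_AbsRing (AbsRing_NormedModule C_AbsRing) f x l.
Proof. split; intros [_ Hf]; (split; [apply is_linear_scal_l | exact Hf]). Qed.

Lemma is_Cderive_const (c x : C) : is_Cderive (fun _ => c) x (RtoC 0).
Proof. exact (is_derive_const (K := C_AbsRing) (V := C_NormedModule) c x). Qed.

Lemma is_Cderive_id (x : C) : is_Cderive (fun y => y) x (RtoC 1).
Proof. apply is_Cderive_K. exact (is_derive_id (K := C_AbsRing) x). Qed.

Lemma is_Cderive_plus (f g : C -> C) (x df dg : C) :
  is_Cderive f x df -> is_Cderive g x dg -> is_Cderive (fun y => f y + g y)%C x (df + dg)%C.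
Proof. exact (is_derive_plus f g x df dg). Qed.

Lemma is_Cderive_minus (f g : C -> C) (x df dg : C) :
  is_Cderive f x df -> is_Cderive g x dg -> is_Cderive (fun y => f y - g y)%C x (df - dg)%C.
Proof. exact (is_derive_minus f g x df dg). Qed.

Lemma is_Cderive_mult (f g : C -> C) (x df dg : C) :
  is_Cderive f x df -> is_Cderive g x dg ->
  is_Cderive (fun y => f y * g y)%C x (df * g x + f x * dg)%C.
Proof.
  rewrite !is_Cderive_K. intros Hf Hg. exact (is_derive_mult f g x df dg Hf Hg Cmult_comm).
Qed.

Lemma is_Cderive_scal (c : C) (f : C -> C) (x df : C) :
  is_Cderive f x df -> is_Cderive (fun y => c * f y)%C x (c * df)%C.
Proof.
  intros Hf. eapply (eq_ind_r (A := C) (is_Cderive _ _)).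
  - exact (is_Cderive_mult _ _ x _ _ (is_Cderive_const c x) Hf).
  - cbv beta. ring.
Qed.

Lemma is_Cderive_comp (f g : C -> C) (x df dg : C) :
  is_Cderive f (g x) df -> is_Cderive g x dg -> is_Cderive (fun y => f (g y)) x (dg * df)%C.
Proof. rewrite (is_Cderive_K g). exact (is_derive_comp f g x df dg). Qed.

Lemma is_Cderive_pow (f : C -> C) (x df : C) (n : nat) :
  is_Cderive f x df -> is_Cderive (fun y => f y ^ S n)%C x (INR (S n) * df * f x ^ n)%C.
Proof.
  intros Hf. induction n as [|n IH].
  - eapply (eq_ind_r (A := C) (is_Cderive _ _)).
    + apply (is_derive_ext f); [intros y; simpl; ring | exact Hf].
    + simpl. ring.
  - eapply (eq_ind_r (A := C) (is_Cderive _ _)).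
    + exact (is_Cderive_mult _ _ x _ _ Hf IH).
    + rewrite !S_INR, !RtoC_plus. simpl. ring.
Qed.

Lemma Cmod_le_abs_Re_Im (z : C) : Cmod z <= Rabs (Re z) + Rabs (Im z).
Proof.
  assert (Hz : z = (RtoC (Re z) + RtoC (Im z) * Ci)%C)
    by (destruct z; apply injective_projections; simpl; ring).
  rewrite Hz at 1. eapply Rle_trans; [apply Cmod_triangle |].
  rewrite Cmod_mult, Cmod_Ci, !Cmod_R. lra.
Qed.

Lemma im_le_Cmod (z : C) : Rabs (Im z) <= Cmod z.
Proof. eapply Rle_trans; [| apply Rmax_Cmod]. apply Rmax_r. Qed.

Lemma Cmod_triangle_rev (x y : C) : Cmod x - Cmod (y - x) <= Cmod y.
Proof.
  pose proof (Cmod_triangle y (x - y)) as H. replace (y + (x - y))%C with x in H by ring.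
  replace (x - y)%C with (- (y - x))%C in H by ring. rewrite Cmod_opp in H. lra.
Qed.

Lemma is_Cderive_inv (x : C) : x <> 0%C -> is_Cderive (fun y => / y)%C x (- / (x * x))%C.
Proof.
  intros Hx. apply is_Cderive_spec. intros eps Heps.
  assert (Hm : 0 < Cmod x) by (apply Cmod_gt_0; exact Hx).
  set (m := Cmod x) in *.
  exists (Rmin (m / 2) (eps * (m * m * m) / 2)). split.
  { apply Rmin_glb_lt; [lra |]. apply Rmult_lt_0_compat; [| lra].
    repeat apply Rmult_lt_0_compat; lra. }
  intros y Hy.
  assert (H1 := Rmin_l (m / 2) (eps * (m * m * m) / 2)).
  assert (H2 := Rmin_r (m / 2) (eps * (m * m * m) / 2)).
  assert (Hmy : m / 2 < Cmod y) by (pose proof (Cmod_triangle_rev x y); unfold m in *; lra).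
  assert (Hy0 : y <> 0%C) by (intros ->; rewrite Cmod_0 in Hmy; lra).
  replace (/ y - / x - (y - x) * - / (x * x))%C with ((y - x) * (y - x) / (x * x * y))%C
    by (field; auto).
  rewrite Cmod_div by (repeat apply Cmult_neq_0; auto). rewrite !Cmod_mult. fold m.
  set (d := Cmod (y - x)) in *. assert (Hd : 0 <= d) by apply Cmod_ge_0.
  apply Rle_trans with (d * d / (m * m * (m / 2))).
  { apply Rmult_le_compat_l; [nra |].
    apply Rinv_le_contravar; [repeat apply Rmult_lt_0_compat; lra |].
    apply Rmult_le_compat_l; nra. }
  apply Rle_trans with (d * (eps * (m * m * m) / 2) / (m * m * (m / 2))).
  { unfold Rdiv. apply Rmult_le_compat_r; [| apply Rmult_le_compat_l; lra].
    left. apply Rinv_0_lt_compat. repeat apply Rmult_lt_0_compat; lra. }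
  right. field. lra.
Qed.

(** * The exponential and the principal logarithm *)

Definition Cexp (z : C) : C := (exp (Re z) * cos (Im z), exp (Re z) * sin (Im z)).

Lemma Cexp_add (a b : C) : Cexp (a + b)%C = (Cexp a * Cexp b)%C.
Proof.
  destruct a as [a1 a2], b as [b1 b2]. unfold Cexp; simpl.
  rewrite exp_plus, cos_plus, sin_plus. apply injective_projections; simpl; ring.
Qed.

Lemma Cmod_sqr (x y : R) : Cmod (x, y) * Cmod (x, y) = x * x + y * y.
Proof. unfold Cmod; simpl. rewrite sqrt_sqrt; [ring | nra]. Qed.

Lemma Cexp_Clog (w : C) : w <> RtoC 0 -> Cexp (Clog w) = w.
Proof.
  intros Hw. assert (Hr : 0 < Cmod w) by (apply Cmod_gt_0; exact Hw).
  destruct w as [x y]. set (r := Cmod (x, y)) in *.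
  assert (Hsq : r * r = x * x + y * y) by apply Cmod_sqr.
  assert (Hx : Rabs x <= r) by exact (re_le_Cmod (x, y)).
  assert (Hu : -1 <= x / r <= 1).
  { apply Rabs_le_between. unfold Rdiv. rewrite Rabs_mult, Rabs_inv, (Rabs_right r) by lra.
    apply (Rmult_le_reg_r r); [lra |]. rewrite Rmult_assoc, Rinv_l by lra. lra. }
  assert (Hs : sqrt (1 - (x / r)²) = Rabs y / r).
  { replace (1 - (x / r)²) with ((y / r)²) by (unfold Rsqr; field_simplify_eq; nra).
    rewrite sqrt_Rsqr_abs. unfold Rdiv. rewrite Rabs_mult, Rabs_inv, (Rabs_right r) by lra.
    reflexivity. }
  unfold Cexp, Clog, Carg; simpl. fold r. rewrite exp_ln by lra.
  destruct (Rle_dec 0 y) as [Hy | Hy].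
  - rewrite cos_acos, sin_acos, Hs, Rabs_right by lra.
    apply injective_projections; simpl; field; lra.
  - rewrite cos_neg, sin_neg, cos_acos, sin_acos, Hs, Rabs_left by lra.
    apply injective_projections; simpl; field; lra.
Qed.

Lemma derivable_pt_lim_little_o (f : R -> R) (x l : R) : derivable_pt_lim f x l ->
  forall eps, 0 < eps -> exists delta, 0 < delta /\
    forall h, Rabs h < delta -> Rabs (f (x + h) - f x - l * h) <= eps * Rabs h.
Proof.
  intros Hf eps Heps. destruct (Hf eps Heps) as [[delta Hdelta] Hh].
  exists delta. split; [exact Hdelta |]. intros h Hlt.
  destruct (Req_dec h 0) as [-> | Hn].
  { rewrite Rplus_0_r, Rabs_R0. replace (f x - f x - l * 0) with 0 by ring. rewrite Rabs_R0. lra. }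
  specialize (Hh h Hn Hlt).
  replace (f (x + h) - f x - l * h) with (((f (x + h) - f x) / h - l) * h) by (field; exact Hn).
  rewrite Rabs_mult. apply Rmult_le_compat_r; [apply Rabs_pos | lra].
Qed.

Lemma Cexp_sub_1_sub_bound (a b e : R) : 0 < e <= 1 -> Cmod (a, b) <= e ->
  Rabs (exp a - 1 - a) <= e * Rabs a -> Rabs (cos b - 1) <= e * Rabs b ->
  Rabs (sin b - b) <= e * Rabs b ->
  Cmod (Cexp (a, b) - 1 - (a, b))%C <= 9 * e * Cmod (a, b).
Proof.
  intros He Hc Hexp Hcos Hsin.
  pose proof (re_le_Cmod (a, b)) as Ha. pose proof (im_le_Cmod (a, b)) as Hb. simpl in Ha, Hb.
  set (c := Cmod (a, b)) in *. pose proof (Rabs_pos a). pose proof (Rabs_pos b).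
  assert (Hea : exp a <= 3).
  { eapply Rle_trans; [| apply exp_le_3]. apply Rabs_le_between in Ha.
    destruct (Req_dec a 1) as [-> | Ha1]; [lra |]. left; apply exp_increasing; lra. }
  assert (Hea0 : 0 < exp a) by apply exp_pos.
  assert (Hsb : Rabs (sin b) <= 2 * Rabs b).
  { replace (sin b) with ((sin b - b) + b) by ring. eapply Rle_trans; [apply Rabs_triang |].
    assert (e * Rabs b <= 1 * Rabs b) by (apply Rmult_le_compat_r; lra). lra. }
  assert (HRe : Rabs (exp a * cos b - 1 - a) <= 4 * e * c).
  { replace (exp a * cos b - 1 - a) with ((exp a - 1 - a) + exp a * (cos b - 1)) by ring.
    eapply Rle_trans; [apply Rabs_triang |]. rewrite Rabs_mult, (Rabs_right (exp a)) by lra.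
    assert (exp a * Rabs (cos b - 1) <= 3 * (e * Rabs b))
      by (apply Rmult_le_compat; try lra; apply Rabs_pos).
    assert (e * Rabs a <= e * c) by (apply Rmult_le_compat_l; lra).
    assert (e * Rabs b <= e * c) by (apply Rmult_le_compat_l; lra).
    lra. }
  assert (HIm : Rabs (exp a * sin b - b) <= 5 * e * c).
  { replace (exp a * sin b - b) with ((exp a - 1 - a) * sin b + a * sin b + (sin b - b)) by ring.
    eapply Rle_trans; [apply Rabs_triang |].
    eapply Rle_trans; [apply Rplus_le_compat_r, Rabs_triang |]. rewrite !Rabs_mult.
    assert (Rabs (exp a - 1 - a) * Rabs (sin b) <= e * Rabs a * (2 * Rabs b))
      by (apply Rmult_le_compat; try apply Rabs_pos; lra).
    assert (Rabs a * Rabs (sin b) <= e * (2 * Rabs b))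
      by (apply Rmult_le_compat; try apply Rabs_pos; lra).
    nra. }
  eapply Rle_trans; [apply Cmod_le_abs_Re_Im |]. unfold Cexp; simpl.
  replace (exp a * cos b + - (1) + - a) with (exp a * cos b - 1 - a) by ring.
  replace (exp a * sin b + - 0 + - b) with (exp a * sin b - b) by ring.
  lra.
Qed.

Lemma Cexp_sub_1_little_o (eps : R) : 0 < eps -> exists delta, 0 < delta /\
  forall d : C, Cmod d < delta -> Cmod (Cexp d - 1 - d)%C <= eps * Cmod d.
Proof.
  intros Heps. set (e := Rmin (eps / 9) 1).
  assert (He : 0 < e <= 1) by (split; [apply Rmin_glb_lt | apply Rmin_r]; lra).
  assert (He9 : e <= eps / 9) by apply Rmin_l.
  destruct (derivable_pt_lim_little_o exp 0 _ (derivable_pt_lim_exp 0) e (proj1 He))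
    as [d1 [Hd1 Hexp]].
  destruct (derivable_pt_lim_little_o cos 0 _ (derivable_pt_lim_cos 0) e (proj1 He))
    as [d2 [Hd2 Hcos]].
  destruct (derivable_pt_lim_little_o sin 0 _ (derivable_pt_lim_sin 0) e (proj1 He))
    as [d3 [Hd3 Hsin]].
  exists (Rmin e (Rmin d1 (Rmin d2 d3))). split; [repeat apply Rmin_glb_lt; lra |].
  intros [a b] Hd.
  pose proof (re_le_Cmod (a, b)) as Ha. pose proof (im_le_Cmod (a, b)) as Hb. simpl in Ha, Hb.
  pose proof (Rmin_l e (Rmin d1 (Rmin d2 d3))). pose proof (Rmin_r e (Rmin d1 (Rmin d2 d3))).
  pose proof (Rmin_l d1 (Rmin d2 d3)). pose proof (Rmin_r d1 (Rmin d2 d3)).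
  pose proof (Rmin_l d2 d3). pose proof (Rmin_r d2 d3).
  specialize (Hexp a ltac:(lra)). specialize (Hcos b ltac:(lra)). specialize (Hsin b ltac:(lra)).
  rewrite Rplus_0_l, exp_0, Rmult_1_l in Hexp.
  rewrite Rplus_0_l, cos_0, sin_0, Ropp_0, Rmult_0_l, Rminus_0_r in Hcos.
  rewrite Rplus_0_l, cos_0, sin_0, Rmult_1_l, Rminus_0_r in Hsin.
  apply Rle_trans with (9 * e * Cmod (a, b)); [apply Cexp_sub_1_sub_bound; try assumption; lra |].
  apply Rmult_le_compat_r; [apply Cmod_ge_0 | lra].
Qed.

Lemma is_Cderive_Cexp (a : C) : is_Cderive Cexp a (Cexp a).
Proof.
  apply is_Cderive_spec. intros eps Heps.
  set (M := Cmod (Cexp a) + 1).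
  assert (HM : 0 < M) by (pose proof (Cmod_ge_0 (Cexp a)); unfold M; lra).
  destruct (Cexp_sub_1_little_o (eps / M)) as [delta [Hdelta Ho]]; [apply Rdiv_lt_0_compat; lra |].
  exists delta. split; [exact Hdelta |]. intros y Hy.
  assert (Hsplit : Cexp y = (Cexp a * Cexp (y - a))%C) by (rewrite <- Cexp_add; f_equal; ring).
  replace (Cexp y - Cexp a - (y - a) * Cexp a)%C with (Cexp a * (Cexp (y - a) - 1 - (y - a)))%C
    by (rewrite Hsplit; ring).
  rewrite Cmod_mult. specialize (Ho _ Hy).
  apply Rle_trans with (M * (eps / M * Cmod (y - a))).
  - apply Rmult_le_compat; try apply Cmod_ge_0; [unfold M; lra | exact Ho].
  - right. field. lra.
Qed.

Lemma is_Cderive_inverse (f g : C -> C) (w0 l : C) (K r : R) :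
  0 < r -> l <> RtoC 0 ->
  (forall w, Cmod (w - w0) < r -> g (f w) = w) ->
  (forall w, Cmod (w - w0) < r -> Cmod (f w - f w0) <= K * Cmod (w - w0)) ->
  is_Cderive g (f w0) l -> is_Cderive f w0 (/ l)%C.
Proof.
  intros Hr Hl Hinv Hlip Hg. rewrite is_Cderive_spec in Hg |- *. intros eps Heps.
  assert (Hml : 0 < Cmod l) by (apply Cmod_gt_0; exact Hl).
  set (L := Rabs K + 1). assert (HL : 0 < L) by (pose proof (Rabs_pos K); unfold L; lra).
  assert (HeL : 0 < eps * Cmod l / L) by (apply Rdiv_lt_0_compat; [apply Rmult_lt_0_compat |]; lra).
  destruct (Hg _ HeL) as [delta [Hdelta Hball]].
  exists (Rmin r (delta / L)). split; [apply Rmin_glb_lt; [lra | apply Rdiv_lt_0_compat; lra] |].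
  intros w Hw. pose proof (Rmin_l r (delta / L)). pose proof (Rmin_r r (delta / L)).
  assert (Hfw : Cmod (f w - f w0) <= L * Cmod (w - w0)).
  { eapply Rle_trans; [apply Hlip; lra |]. apply Rmult_le_compat_r; [apply Cmod_ge_0 |].
    pose proof (Rle_abs K). unfold L; lra. }
  assert (Hdist : Cmod (f w - f w0) < delta).
  { eapply Rle_lt_trans; [exact Hfw |].
    apply (Rmult_lt_reg_r (/ L)); [apply Rinv_0_lt_compat; lra |].
    replace (L * Cmod (w - w0) * / L) with (Cmod (w - w0)) by (field; lra). unfold Rdiv in *; lra. }
  specialize (Hball _ Hdist).
  rewrite (Hinv w), (Hinv w0) in Hball
    by (try (replace (w0 - w0)%C with (RtoC 0) by ring; rewrite Cmod_0); lra).
  assert (Hmain : Cmod (w - w0 - (f w - f w0) * l) <= eps * Cmod (w - w0) * Cmod l).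
  { eapply Rle_trans; [exact Hball |].
    replace (eps * Cmod (w - w0) * Cmod l) with (eps * Cmod l / L * (L * Cmod (w - w0)))
      by (field; lra).
    apply Rmult_le_compat_l; [lra | exact Hfw]. }
  replace (f w - f w0 - (w - w0) * / l)%C with (- (w - w0 - (f w - f w0) * l) / l)%C
    by (field; exact Hl).
  rewrite Cmod_div, Cmod_opp by exact Hl.
  unfold Rdiv. apply (Rmult_le_reg_r (Cmod l)); [exact Hml |].
  rewrite Rmult_assoc, Rinv_l, Rmult_1_r by lra. exact Hmain.
Qed.

Lemma mean_value_ineq (f df : R -> R) (a b M : R) :
  (forall t, Rmin a b <= t <= Rmax a b -> is_derive f t (df t)) ->
  (forall t, Rmin a b <= t <= Rmax a b -> Rabs (df t) <= M) ->
  Rabs (f b - f a) <= M * Rabs (b - a).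
Proof.
  intros Hf HM. destruct (MVT_gen f a b df) as [c [Hc ->]].
  - intros t Ht. apply Hf. lra.
  - intros t Ht. apply derivable_continuous_pt. exists (df t). apply is_derive_Reals, Hf, Ht.
  - rewrite Rabs_mult. apply Rmult_le_compat_r; [apply Rabs_pos | apply HM, Hc].
Qed.

Lemma atan_lipschitz (a b : R) : Rabs (atan b - atan a) <= Rabs (b - a).
Proof.
  rewrite <- (Rmult_1_l (Rabs (b - a))).
  apply mean_value_ineq with (df := fun t => / (1 + t²)); [intros t _; apply is_derive_atan |].
  intros t _. pose proof (Rle_0_sqr t).
  rewrite Rabs_right by (left; apply Rinv_0_lt_compat; lra).
  rewrite <- Rinv_1. apply Rinv_le_contravar; lra.
Qed.

Lemma ln_lipschitz (a b m : R) : 0 < m -> m <= a -> m <= b ->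
  Rabs (ln b - ln a) <= / m * Rabs (b - a).
Proof.
  intros Hm Ha Hb. apply mean_value_ineq with (df := Rinv).
  - intros t Ht. apply is_derive_ln. pose proof (Rmin_glb a b m Ha Hb). lra.
  - intros t Ht. pose proof (Rmin_glb a b m Ha Hb).
    rewrite Rabs_right by (left; apply Rinv_0_lt_compat; lra). apply Rinv_le_contravar; lra.
Qed.

Lemma Rdiv_lipschitz (a b a0 b0 h : R) : 0 < Rabs b0 ->
  Rabs (a - a0) <= h -> Rabs (b - b0) <= h -> h <= Rabs b0 / 2 ->
  Rabs (a / b - a0 / b0) <= 2 * (Rabs b0 + Rabs a0) / (b0 * b0) * h.
Proof.
  intros Hb0 Ha Hb Hh.
  assert (Hb' : Rabs b0 / 2 <= Rabs b)
    by (pose proof (Rabs_triang_inv b0 b); rewrite Rabs_minus_sym in Hb; lra).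
  assert (Hbn : b <> 0) by (intros ->; rewrite Rabs_R0 in Hb'; lra).
  assert (Hb0n : b0 <> 0) by (intros ->; rewrite Rabs_R0 in Hb0; lra).
  replace (a / b - a0 / b0) with (((a - a0) * b0 - a0 * (b - b0)) / (b * b0)) by (field; auto).
  unfold Rdiv. rewrite Rabs_mult, Rabs_inv, Rabs_mult.
  assert (Hnum : Rabs ((a - a0) * b0 - a0 * (b - b0)) <= (Rabs b0 + Rabs a0) * h).
  { unfold Rminus at 1. eapply Rle_trans; [apply Rabs_triang |]. rewrite Rabs_Ropp, !Rabs_mult.
    pose proof (Rabs_pos a0). pose proof (Rabs_pos b0). nra. }
  replace (b0 * b0) with (Rabs b0 * Rabs b0) by (rewrite <- Rabs_mult, Rabs_right; [ring | nra]).
  apply Rle_trans with ((Rabs b0 + Rabs a0) * h * / (Rabs b0 / 2 * Rabs b0)).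
  - apply Rmult_le_compat; [apply Rabs_pos | left; apply Rinv_0_lt_compat; nra | exact Hnum |].
    apply Rinv_le_contravar; [nra | apply Rmult_le_compat_r; lra].
  - right. field. lra.
Qed.

Lemma Cmod_factor_l (x y : R) : x <> 0 -> Cmod (x, y) = Rabs x * sqrt (1 + (y / x)²).
Proof.
  intros Hx. unfold Cmod; simpl.
  replace (x * (x * 1) + y * (y * 1)) with (x² * (1 + (y / x)²))
    by (unfold Rsqr; field; exact Hx).
  pose proof (Rle_0_sqr x). pose proof (Rle_0_sqr (y / x)).
  rewrite sqrt_mult, sqrt_Rsqr_abs by lra.
  reflexivity.
Qed.

Lemma Cmod_swap (x y : R) : Cmod (x, y) = Cmod (y, x).
Proof. unfold Cmod; simpl. f_equal. ring. Qed.

Lemma Carg_Re_pos (x y : R) : 0 < x -> Carg (x, y) = atan (y / x).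
Proof.
  intros Hx. pose proof (atan_bound (y / x)). pose proof PI_RGT_0.
  assert (Hcos : x / Cmod (x, y) = cos (atan (y / x))).
  { rewrite cos_atan, Cmod_factor_l, Rabs_right by lra.
    pose proof (Rle_0_sqr (y / x)). assert (0 < sqrt (1 + (y / x)²)) by (apply sqrt_lt_R0; lra).
    field. lra. }
  unfold Carg; simpl. rewrite Hcos. destruct (Rle_dec 0 y) as [Hy | Hy].
  - apply acos_cos. split; [| lra].
    destruct (Rle_lt_or_eq_dec 0 (y / x)) as [Hp | <-]; [apply Rdiv_le_0_compat; lra | |].
    + rewrite <- atan_0. left. apply atan_increasing, Hp.
    + rewrite atan_0. lra.
  - rewrite <- cos_neg, acos_cos; [ring |]. split; [| lra].
    assert (atan (y / x) < 0)
      by (rewrite <- atan_0; apply atan_increasing; apply Rdiv_neg_pos; lra).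
    lra.
Qed.

Lemma Carg_Im_pos (x y : R) : 0 < y -> Carg (x, y) = PI / 2 - atan (x / y).
Proof.
  intros Hy. pose proof (atan_bound (x / y)). pose proof PI_RGT_0.
  assert (Hcos : x / Cmod (x, y) = cos (PI / 2 - atan (x / y))).
  { rewrite cos_shift, sin_atan, Cmod_swap, Cmod_factor_l, Rabs_right by lra.
    pose proof (Rle_0_sqr (x / y)). assert (0 < sqrt (1 + (x / y)²)) by (apply sqrt_lt_R0; lra).
    field. lra. }
  unfold Carg; simpl. destruct (Rle_dec 0 y) as [_ | Hy']; [| lra].
  rewrite Hcos. apply acos_cos. lra.
Qed.

Lemma Carg_Im_neg (x y : R) : y < 0 -> Carg (x, y) = - (PI / 2) - atan (x / y).
Proof.
  intros Hy. pose proof (atan_bound (x / y)). pose proof PI_RGT_0.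
  assert (Hcos : x / Cmod (x, y) = cos (PI / 2 + atan (x / y))).
  { replace (cos (PI / 2 + atan (x / y))) with (- sin (atan (x / y))) by (rewrite sin_cos; ring).
    rewrite sin_atan, Cmod_swap, Cmod_factor_l, Rabs_left by lra.
    pose proof (Rle_0_sqr (x / y)). assert (0 < sqrt (1 + (x / y)²)) by (apply sqrt_lt_R0; lra).
    field. lra. }
  unfold Carg; simpl. destruct (Rle_dec 0 y) as [Hy' | _]; [lra |].
  rewrite Hcos, acos_cos by lra. ring.
Qed.

Definition Clog_dom (w : C) : Prop := 0 < Re w \/ Im w <> 0.

Lemma Clog_dom_neq_0 (w : C) : Clog_dom w -> w <> RtoC 0.
Proof.
  destruct w as [x y]. intros Hw E. injection E as -> ->. destruct Hw as [H | H]; simpl in H; lra.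
Qed.

Lemma Carg_lipschitz (w0 : C) : Clog_dom w0 -> exists K r, 0 < r /\
  forall w, Cmod (w - w0) < r -> Rabs (Carg w - Carg w0) <= K * Cmod (w - w0).
Proof.
  destruct w0 as [x0 y0]. intros Hdom. unfold Clog_dom in Hdom; simpl in Hdom.
  assert (Hcomp : forall x y, Rabs (x - x0) <= Cmod ((x, y) - (x0, y0))%C /\
                              Rabs (y - y0) <= Cmod ((x, y) - (x0, y0))%C).
  { intros x y. pose proof (re_le_Cmod ((x, y) - (x0, y0))%C).
    pose proof (im_le_Cmod ((x, y) - (x0, y0))%C). simpl in *. split; assumption. }
  destruct (Rlt_dec 0 x0) as [Hx0 | Hx0].
  - exists (2 * (Rabs x0 + Rabs y0) / (x0 * x0)), (x0 / 2). split; [lra |].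
    intros [x y] Hw. destruct (Hcomp x y) as [Hx Hy].
    assert (0 < x) by (apply Rabs_le_between in Hx; lra).
    rewrite !Carg_Re_pos by lra. eapply Rle_trans; [apply atan_lipschitz |].
    apply Rdiv_lipschitz; rewrite ?(Rabs_right x0) by lra; lra.
  - assert (Hy0 : 0 < Rabs y0) by (apply Rabs_pos_lt; destruct Hdom; lra).
    exists (2 * (Rabs y0 + Rabs x0) / (y0 * y0)), (Rabs y0 / 2). split; [lra |].
    intros [x y] Hw. destruct (Hcomp x y) as [Hx Hy].
    assert (Hchart : Carg (x, y) - Carg (x0, y0) = atan (x0 / y0) - atan (x / y)).
    { destruct (Rlt_dec 0 y0) as [Hp | Hn].
      - rewrite Rabs_right in Hw, Hy0 by lra. apply Rabs_le_between in Hy.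
        rewrite !Carg_Im_pos by lra. ring.
      - rewrite Rabs_left in Hw, Hy0 by lra. apply Rabs_le_between in Hy.
        rewrite !Carg_Im_neg by lra. ring. }
    rewrite Hchart, Rabs_minus_sym. eapply Rle_trans; [apply atan_lipschitz |].
    apply Rdiv_lipschitz; lra.
Qed.

Lemma Clog_lipschitz (w0 : C) : Clog_dom w0 -> exists K r, 0 < r /\
  forall w, Cmod (w - w0) < r -> Cmod (Clog w - Clog w0) <= K * Cmod (w - w0).
Proof.
  intros Hdom. assert (Hm0 : 0 < Cmod w0) by (apply Cmod_gt_0, Clog_dom_neq_0, Hdom).
  destruct (Carg_lipschitz w0 Hdom) as [K [r [Hr Harg]]].
  exists (2 / Cmod w0 + K), (Rmin r (Cmod w0 / 2)). split; [apply Rmin_glb_lt; lra |].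
  intros w Hw. pose proof (Rmin_l r (Cmod w0 / 2)). pose proof (Rmin_r r (Cmod w0 / 2)).
  specialize (Harg w ltac:(lra)).
  pose proof (Cmod_triangle_rev w0 w). pose proof (Cmod_triangle_rev w w0).
  replace (w0 - w)%C with (- (w - w0))%C in * by ring. rewrite Cmod_opp in *.
  assert (Hln : Rabs (ln (Cmod w) - ln (Cmod w0)) <= 2 / Cmod w0 * Cmod (w - w0)).
  { eapply Rle_trans; [apply (ln_lipschitz _ _ (Cmod w0 / 2)); lra |].
    replace (/ (Cmod w0 / 2)) with (2 / Cmod w0) by (field; lra).
    apply Rmult_le_compat_l; [apply Rlt_le, Rdiv_lt_0_compat; lra |]. apply Rabs_le; lra. }
  eapply Rle_trans; [apply Cmod_le_abs_Re_Im |]. unfold Clog; simpl.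
  replace (ln (Cmod w) + - ln (Cmod w0)) with (ln (Cmod w) - ln (Cmod w0)) by ring.
  replace (Carg w + - Carg w0) with (Carg w - Carg w0) by ring.
  lra.
Qed.

Lemma is_Cderive_Clog (w0 : C) : Clog_dom w0 -> is_Cderive Clog w0 (/ w0)%C.
Proof.
  intros Hdom. pose proof (Clog_dom_neq_0 w0 Hdom) as Hw0.
  assert (Hm0 : 0 < Cmod w0) by (apply Cmod_gt_0, Hw0).
  destruct (Clog_lipschitz w0 Hdom) as [K [r [Hr Hlip]]].
  rewrite <- (Cexp_Clog w0 Hw0) at 2.
  apply (is_Cderive_inverse Clog Cexp w0 _ K (Rmin r (Cmod w0))).
  - apply Rmin_glb_lt; lra.
  - rewrite Cexp_Clog; exact Hw0.
  - intros w Hw. apply Cexp_Clog. intros ->. pose proof (Rmin_r r (Cmod w0)).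
    replace (RtoC 0 - w0)%C with (- w0)%C in Hw by ring. rewrite Cmod_opp in Hw. lra.
  - intros w Hw. apply Hlip. pose proof (Rmin_l r (Cmod w0)). lra.
  - apply is_Cderive_Cexp.
Qed.

(** * Derivatives of the arctangent *)

Lemma atan_dom_Clog_dom (z : C) : atan_dom z -> Clog_dom (1 - Ci * z)%C /\ Clog_dom (1 + Ci * z)%C.
Proof.
  destruct z as [x y]. unfold atan_dom, Clog_dom; simpl. intros Hz.
  destruct (Req_dec x 0) as [-> | Hx].
  - assert (Hy : Rabs y < 1)
      by (apply Rnot_le_lt; intros Hy; apply Hz; split; [reflexivity | exact Hy]).
    apply Rabs_def2 in Hy. split; left; lra.
  - split; right; lra.
Qed.

Lemma atan_dom_pm_Ci_neq_0 (z : C) : atan_dom z -> (z + Ci)%C <> RtoC 0 /\ (z - Ci)%C <> RtoC 0.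
Proof.
  destruct z as [x y]. unfold atan_dom; simpl. intros Hz. split; intros E; injection E as Ex Ey;
    apply Hz; split; [lra | | lra |].
  - replace y with (-1) by lra. rewrite Rabs_left by lra. lra.
  - replace y with 1 by lra. rewrite Rabs_R1. lra.
Qed.

Lemma one_plus_sqr_factor (z : C) : (1 + z * z)%C = ((z + Ci) * (z - Ci))%C.
Proof. destruct z; apply injective_projections; simpl; ring. Qed.

Lemma atan_dom_one_plus_sqr_neq_0 (z : C) : atan_dom z -> (1 + z * z)%C <> RtoC 0.
Proof.
  intros Hz. destruct (atan_dom_pm_Ci_neq_0 z Hz).
  rewrite one_plus_sqr_factor. apply Cmult_neq_0; assumption.
Qed.

Lemma Ci_sqr : (Ci * Ci)%C = (- 1)%C.
Proof. apply injective_projections; simpl; ring. Qed.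

Lemma inv_one_plus_sqr_partial_fractions (z : C) :
  (z + Ci)%C <> RtoC 0 -> (z - Ci)%C <> RtoC 0 ->
  (/ (1 + z * z))%C = (Ci / 2 * (/ (z + Ci) - / (z - Ci)))%C.
Proof.
  intros Hp Hm. rewrite one_plus_sqr_factor.
  transitivity (- (Ci * Ci) * / ((z + Ci) * (z - Ci)))%C;
    [rewrite Ci_sqr; field; split; assumption |].
  field. split; assumption.
Qed.

Lemma is_Cderive_Catan (z : C) : atan_dom z -> is_Cderive Catan z (/ (1 + z * z))%C.
Proof.
  intros Hz. destruct (atan_dom_Clog_dom z Hz) as [Hm Hp].
  pose proof (Clog_dom_neq_0 _ Hm). pose proof (Clog_dom_neq_0 _ Hp).
  eapply (eq_ind_r (A := C) (is_Cderive _ _)).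
  - apply is_Cderive_scal, is_Cderive_minus.
    + apply (is_Cderive_comp Clog (fun y => 1 - Ci * y)%C); [apply is_Cderive_Clog, Hm |].
      apply is_Cderive_minus; [apply is_Cderive_const | apply is_Cderive_scal, is_Cderive_id].
    + apply (is_Cderive_comp Clog (fun y => 1 + Ci * y)%C); [apply is_Cderive_Clog, Hp |].
      apply is_Cderive_plus; [apply is_Cderive_const | apply is_Cderive_scal, is_Cderive_id].
  - replace (1 + z * z)%C with ((1 - Ci * z) * (1 + Ci * z))%C
      by (destruct z; apply injective_projections; simpl; ring).
    symmetry. transitivity (- (Ci * Ci) / 2 * (/ (1 - Ci * z) + / (1 + Ci * z)))%C;
      [field; split; assumption |].
    rewrite Ci_sqr. field. split; assumption.
Qed.

Definition Catan_deriv (n : nat) (z : C) : C :=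
  match n with
  | O => Catan z
  | S m => (INR (Factorial.fact m) * (- 1) ^ m * (Ci / 2) *
            ((/ (z + Ci)) ^ S m - (/ (z - Ci)) ^ S m))%C
  end.

Lemma is_Cderive_inv_shift (c z : C) : (z + c)%C <> RtoC 0 ->
  is_Cderive (fun y => / (y + c))%C z (- (/ (z + c) * / (z + c)))%C.
Proof.
  intros Hz. eapply (eq_ind_r (A := C) (is_Cderive _ _)).
  - apply (is_Cderive_comp Cinv (fun y => y + c)%C); [apply is_Cderive_inv, Hz |].
    apply is_Cderive_plus; [apply is_Cderive_id | apply is_Cderive_const].
  - field. exact Hz.
Qed.

Lemma is_Cderive_Catan_deriv (n : nat) (z : C) : atan_dom z ->
  is_Cderive (Catan_deriv n) z (Catan_deriv (S n) z).
Proof.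
  intros Hz. destruct (atan_dom_pm_Ci_neq_0 z Hz) as [Hp Hm].
  destruct n as [| m]; unfold Catan_deriv.
  - eapply (eq_ind_r (A := C) (is_Cderive _ _)); [apply is_Cderive_Catan, Hz |].
    rewrite inv_one_plus_sqr_partial_fractions by assumption. simpl. ring.
  - eapply (eq_ind_r (A := C) (is_Cderive _ _)).
    + apply is_Cderive_scal, is_Cderive_minus; apply is_Cderive_pow.
      * apply is_Cderive_inv_shift, Hp.
      * apply (is_Cderive_inv_shift (- Ci)). exact Hm.
    + cbv beta. rewrite fact_simpl, mult_INR, RtoC_mult, !Cpow_S.
      replace (z + - Ci)%C with (z - Ci)%C by ring.
      ring.
Qed.

Definition binom_alt_term (s q : C) (m k : nat) : C :=
  ((- 1) ^ k * INR (binom k (m - k)) * s ^ (2 * k) * q ^ k)%C.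

Definition binom_alt_sum (s q : C) (m : nat) : C := sum_n (binom_alt_term s q m) m.

Lemma binom_alt_term_succ (s q : C) (m k : nat) : (k <= m)%nat ->
  binom_alt_term s q (S (S m)) (S k) =
  (- (s * s * q) * (binom_alt_term s q m k + binom_alt_term s q (S m) k))%C.
Proof.
  intros Hk. unfold binom_alt_term.
  replace (S (S m) - S k)%nat with (S (m - k)) by lia.
  replace (S m - k)%nat with (S (m - k)) by lia.
  replace (2 * S k)%nat with (S (S (2 * k))) by lia.
  change (binom (S k) (S (m - k))) with (binom k (m - k) + binom k (S (m - k)))%nat.
  rewrite plus_INR, RtoC_plus, !Cpow_S. ring.
Qed.

Lemma binom_alt_sum_rec (s q : C) (m : nat) :
  binom_alt_sum s q (S (S m)) =
  (- (s * s * q) * (binom_alt_sum s q m + binom_alt_sum s q (S m)))%C.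
Proof.
  unfold binom_alt_sum.
  assert (Hfirst : sum_n (binom_alt_term s q (S (S m))) (S (S m)) =
    (binom_alt_term s q (S (S m)) 0 + sum_n (fun k => binom_alt_term s q (S (S m)) (S k)) (S m))%C)
    by (unfold sum_n; rewrite sum_Sn_m by lia; rewrite <- sum_n_m_S; reflexivity).
  assert (Hlast : forall f : nat -> C, sum_n f (S m) = (sum_n f m + f (S m))%C)
    by (intros f; exact (sum_Sn f m)).
  assert (Hinner : sum_n (fun k => binom_alt_term s q (S (S m)) (S k)) m =
    (- (s * s * q) * (sum_n (binom_alt_term s q m) m + sum_n (binom_alt_term s q (S m)) m))%C).
  { rewrite <- (sum_n_plus (G := C_AbelianMonoid)), <- (sum_n_mult_l (K := C_Ring)).
    apply sum_n_ext_loc. intros k Hk. exact (binom_alt_term_succ s q m k Hk). }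
  assert (Hzero : binom_alt_term s q (S (S m)) 0 = RtoC 0).
  { unfold binom_alt_term. rewrite Nat.sub_0_r. change (binom 0 (S (S m))) with 0%nat.
    rewrite INR_0. ring. }
  assert (Htop : binom_alt_term s q (S (S m)) (S (S m)) =
                 (- (s * s * q) * binom_alt_term s q (S m) (S m))%C).
  { unfold binom_alt_term. rewrite !Nat.sub_diag. change (binom (S (S m)) 0) with 1%nat.
    change (binom (S m) 0) with 1%nat.
    replace (2 * S (S m))%nat with (S (S (2 * S m))) by lia. rewrite !Cpow_S. ring. }
  rewrite Hfirst, Hlast, Hinner, Hzero, Htop, (Hlast (binom_alt_term s q (S m))). ring.
Qed.

(* The classical binomial expansion of the Lucas sequence [(x^(m+1) - y^(m+1)) / (x - y)]
   in terms of [x + y = s x y] and [x y]. *)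
Lemma binom_alt_sum_lucas (s x y : C) (m : nat) : (x + y)%C = (s * (x * y))%C ->
  ((x - y) * binom_alt_sum s (x * y) m)%C = ((- s) ^ m * (x ^ S m - y ^ S m))%C.
Proof.
  intros Hxy.
  enough (H : forall m,
    ((x - y) * binom_alt_sum s (x * y) m)%C = ((- s) ^ m * (x ^ S m - y ^ S m))%C /\
    ((x - y) * binom_alt_sum s (x * y) (S m))%C = ((- s) ^ S m * (x ^ S (S m) - y ^ S (S m)))%C)
    by exact (proj1 (H m)).
  clear m. intros m. induction m as [| m [IH0 IH1]]; split.
  - unfold binom_alt_sum. rewrite sum_O. unfold binom_alt_term.
    cbn [binom Nat.sub Nat.mul Nat.add Cpow INR]. ring.
  - unfold binom_alt_sum. rewrite sum_Sn, sum_O. unfold binom_alt_term.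
    change (@plus C_AbelianMonoid) with Cplus. cbn [binom Nat.sub Nat.mul Nat.add Cpow INR].
    transitivity (- s * (s * (x * y)) * (x - y))%C; [ring |].
    rewrite <- Hxy. ring.
  - exact IH1.
  - rewrite binom_alt_sum_rec.
    transitivity (- (s * s * (x * y)) *
      ((x - y) * binom_alt_sum s (x * y) m + (x - y) * binom_alt_sum s (x * y) (S m)))%C; [ring |].
    rewrite IH0, IH1, !Cpow_S.
    generalize ((- s) ^ m)%C (x ^ m)%C (y ^ m)%C. intros t a b.
    transitivity
      (t * s * s * ((x + y) * (x * (x * a) - y * (y * b)) - (x * y) * (x * a - y * b)))%C.
    + rewrite Hxy. ring.
    + ring.
Qed.

Lemma Catan_deriv_closed_form (n : nat) (z : C) : (1 <= n)%nat -> atan_dom z -> z <> RtoC 0 ->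
  Catan_deriv n z =
  (INR (Factorial.fact (n - 1)) / (2 * z) ^ (n - 1) *
   sum_n (fun k : nat => (-1) ^ k * INR (binom k (n - k - 1)) * (2 * z) ^ (2 * k)
                         / (1 + z * z) ^ (k + 1)) (n - 1))%C.
Proof.
  intros Hn Hz Hz0. destruct n as [| m]; [lia |].
  replace (S m - 1)%nat with m by lia. destruct (atan_dom_pm_Ci_neq_0 z Hz) as [Hp Hm].
  pose proof (atan_dom_one_plus_sqr_neq_0 z Hz) as Hsq.
  assert (H2z : (2 * z)%C <> RtoC 0)
    by (apply Cmult_neq_0; [intros E; injection E; lra | exact Hz0]).
  set (x := (/ (z + Ci))%C). set (y := (/ (z - Ci))%C).
  assert (Hxy : (x * y)%C = (/ (1 + z * z))%C)
    by (unfold x, y; rewrite one_plus_sqr_factor; field; split; assumption).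
  assert (Hsum : (x + y)%C = (2 * z * (x * y))%C)
    by (rewrite Hxy; unfold x, y; rewrite one_plus_sqr_factor; field; split; assumption).
  assert (Hdiff : (Ci / 2 * (x - y))%C = (x * y)%C)
    by (rewrite Hxy; symmetry; apply inv_one_plus_sqr_partial_fractions; assumption).
  replace (sum_n _ m) with (x * y * binom_alt_sum (2 * z) (x * y) m)%C.
  2: { unfold binom_alt_sum. rewrite <- (sum_n_mult_l (K := C_Ring)). apply sum_n_ext_loc.
       intros k Hk. change (x * y * binom_alt_term (2 * z) (x * y) m k =
         (-1) ^ k * INR (binom k (S m - k - 1)) * (2 * z) ^ (2 * k) / (1 + z * z) ^ (k + 1))%C.
       unfold binom_alt_term. replace (S m - k - 1)%nat with (m - k)%nat by lia.
       rewrite Hxy, (Cpow_inv _ _ Hsq), Nat.add_1_r, Cpow_S.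
       field. split; try apply Cpow_nz; exact Hsq. }
  rewrite <- Hdiff at 1.
  transitivity (INR (Factorial.fact m) * (Ci / 2) *
    ((x - y) * binom_alt_sum (2 * z) (x * y) m) / (2 * z) ^ m)%C.
  2: { field. apply Cpow_nz, H2z. }
  rewrite binom_alt_sum_lucas by exact Hsum.
  replace (- (2 * z))%C with (- 1 * (2 * z))%C by ring. rewrite Cpow_mult_l.
  unfold Catan_deriv. fold x y. field. apply Cpow_nz, H2z.
Qed.

(** * Taylor expansion of the arctangent at 1 *)

Lemma Cpow_polar (r t : R) (k : nat) :
  Cpow (r * cos t, r * sin t) k = (r ^ k * cos (INR k * t), r ^ k * sin (INR k * t)).
Proof.
  induction k as [| k IH].
  - simpl. rewrite Rmult_0_l, cos_0, sin_0. apply injective_projections; simpl; ring.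
  - rewrite Cpow_S, IH, S_INR, Rmult_plus_distr_r, Rmult_1_l, cos_plus, sin_plus.
    apply injective_projections; simpl; ring.
Qed.

Lemma sqrt2_pos : 0 < sqrt 2.
Proof. apply sqrt_lt_R0. lra. Qed.

Lemma one_lt_sqrt2 : 1 < sqrt 2.
Proof. rewrite <- sqrt_1. apply sqrt_lt_1; lra. Qed.

Lemma inv_sqrt2_mul_lt_1 (rho : R) : rho < sqrt 2 -> / sqrt 2 * rho < 1.
Proof.
  intros Hrho. pose proof sqrt2_pos. apply (Rmult_lt_reg_l (sqrt 2)); [lra |].
  rewrite <- Rmult_assoc, Rinv_r, Rmult_1_l, Rmult_1_r by lra. exact Hrho.
Qed.

Lemma inv_sqrt2_lt_1 : / sqrt 2 < 1.
Proof. rewrite <- (Rmult_1_r (/ sqrt 2)). apply inv_sqrt2_mul_lt_1, one_lt_sqrt2. Qed.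

(* [omega = (i - 1) / 2]: the roots of [1 + (1 + u)^2] are [1 / omega] and its conjugate, and
   the polar form gives [Im (omega ^ k) = 2^(-k/2) sin (3 k PI / 4)], the numerator in [T]. *)
Definition omega : C := (/ sqrt 2 * cos (3 * PI / 4), / sqrt 2 * sin (3 * PI / 4)).

Lemma omega_eq : omega = (- / 2, / 2).
Proof.
  assert (Hs : sqrt 2 <> 0) by apply Rgt_not_eq, sqrt2_pos.
  assert (H2 : / sqrt 2 * / sqrt 2 = / 2) by (rewrite <- Rinv_mult, sqrt_sqrt; lra).
  unfold omega. replace (3 * PI / 4) with (PI - PI / 4) by field.
  rewrite Rtrigo_facts.cos_pi_minus, cos_PI4, sin_PI_x, sin_PI4.
  apply injective_projections; simpl; rewrite <- H2; field; exact Hs.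
Qed.

Lemma Cmod_omega : Cmod omega = / sqrt 2.
Proof. rewrite omega_eq. unfold Cmod; simpl. rewrite <- sqrt_inv. f_equal. field. Qed.

Lemma Im_omega_pow (k : nat) : Im (Cpow omega k) = (/ sqrt 2) ^ k * sin (3 * INR k * PI / 4).
Proof.
  unfold omega. rewrite Cpow_polar. simpl.
  replace (3 * INR k * PI / 4) with (INR k * (3 * PI / 4)) by field. reflexivity.
Qed.

Lemma Rpower_2_half (k : nat) : Rpower 2 (INR k / 2) = sqrt 2 ^ k.
Proof.
  replace (INR k / 2) with (/ 2 * INR k) by field.
  rewrite <- Rpower_mult, Rpower_sqrt, Rpower_pow by (try apply sqrt2_pos; lra). reflexivity.
Qed.

(* [Catan (1 + u) = PI / 4 + sum_(k >= 1) atan1_coef k * u ^ k] for [|u| < sqrt 2]. *)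
Definition atan1_coef (k : nat) : R := Im (Cpow omega k) / INR k.

Lemma T_succ (n : nat) : T (S n) = T n + (-1) ^ S n * atan1_coef (S n).
Proof.
  cbn [T]. unfold atan1_coef. rewrite Im_omega_pow, Rpower_2_half, pow_inv.
  field. split; [apply pow_nonzero, Rgt_not_eq, sqrt2_pos | apply not_0_INR; lia].
Qed.

Fixpoint atan1_taylor (N : nat) (u : C) : C :=
  match N with
  | O => RtoC 0
  | S M => (atan1_taylor M u + atan1_coef (S M) * u ^ S M)%C
  end.

Fixpoint atan1_taylor_deriv (N : nat) (u : C) : C :=
  match N with
  | O => RtoC 0
  | S M => (atan1_taylor_deriv M u + Im (Cpow omega (S M)) * u ^ M)%C
  end.

Lemma is_Cderive_atan1_taylor (N : nat) (u : C) :
  is_Cderive (atan1_taylor N) u (atan1_taylor_deriv N u).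
Proof.
  induction N as [| M IH]; [apply is_Cderive_const |].
  apply is_Cderive_plus; [exact IH |].
  eapply (eq_ind_r (A := C) (is_Cderive _ _));
    [apply is_Cderive_scal, is_Cderive_pow, is_Cderive_id |].
  assert (Hc : RtoC (Im (omega ^ S M)) = (RtoC (atan1_coef (S M)) * RtoC (INR (S M)))%C)
    by (rewrite <- RtoC_mult; unfold atan1_coef; f_equal; field; apply not_0_INR; lia).
  rewrite Hc. ring.
Qed.

Definition atan1_remainder (N : nat) (u : C) : C :=
  (Ci / 2 * (Cconj omega * (u * Cconj omega) ^ N / (1 - u * Cconj omega)
             - omega * (u * omega) ^ N / (1 - u * omega)))%C.

Lemma RtoC_Im (c : C) : RtoC (Im c) = (Ci / 2 * (Cconj c - c))%C.
Proof. destruct c as [a b]. apply injective_projections; simpl; field. Qed.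

Lemma one_plus_sqr_shift_factor (u : C) :
  (1 + (1 + u) * (1 + u))%C = (2 * (1 - u * omega) * (1 - u * Cconj omega))%C.
Proof. rewrite omega_eq. destruct u. apply injective_projections; simpl; field. Qed.

Lemma inv_one_plus_sqr_shift_partial_fractions (u : C) :
  (1 - u * omega)%C <> RtoC 0 -> (1 - u * Cconj omega)%C <> RtoC 0 ->
  (/ (1 + (1 + u) * (1 + u)))%C =
  (Ci / 2 * (Cconj omega / (1 - u * Cconj omega) - omega / (1 - u * omega)))%C.
Proof.
  intros Hw Hwc.
  assert (Hdiff : (Cconj omega - omega)%C = (- Ci)%C)
    by (rewrite omega_eq; apply injective_projections; simpl; field).
  rewrite one_plus_sqr_shift_factor. symmetry.
  transitivity (Ci / 2 * (Cconj omega - omega) / ((1 - u * omega) * (1 - u * Cconj omega)))%C;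
    [field; split; assumption |].
  rewrite Hdiff.
  transitivity (- (Ci * Ci) / (2 * (1 - u * omega) * (1 - u * Cconj omega)))%C;
    [field; split; assumption |].
  rewrite Ci_sqr. field. split; assumption.
Qed.

Lemma atan1_taylor_deriv_eq (N : nat) (u : C) :
  (1 - u * omega)%C <> RtoC 0 -> (1 - u * Cconj omega)%C <> RtoC 0 ->
  atan1_taylor_deriv N u = (/ (1 + (1 + u) * (1 + u)) - atan1_remainder N u)%C.
Proof.
  intros Hw Hwc.
  assert (Hsq : (1 + (1 + u) * (1 + u))%C <> RtoC 0).
  { rewrite one_plus_sqr_shift_factor. repeat apply Cmult_neq_0; try assumption.
    intros E. injection E. lra. }
  induction N as [| N IH].
  - unfold atan1_remainder. rewrite inv_one_plus_sqr_shift_partial_fractions by assumption.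
    cbn [atan1_taylor_deriv Cpow]. field. split; assumption.
  - cbn [atan1_taylor_deriv]. rewrite IH, RtoC_Im, Cpow_conj. unfold atan1_remainder.
    rewrite !Cpow_mult_l, !Cpow_S.
    generalize (u ^ N)%C (Cconj omega ^ N)%C (omega ^ N)%C. intros. field. repeat split; assumption.
Qed.

Lemma geom_tail_bound (c u : C) (rho : R) (N : nat) : Cmod u <= rho -> Cmod c * rho < 1 ->
  (1 - u * c)%C <> RtoC 0 /\
  Cmod (c * (u * c) ^ N / (1 - u * c))%C <= Cmod c * (Cmod c * rho) ^ N / (1 - Cmod c * rho).
Proof.
  intros Hu Hc. pose proof (Cmod_ge_0 u). pose proof (Cmod_ge_0 c).
  assert (Hden : 1 - Cmod c * rho <= Cmod (1 - u * c)).
  { pose proof (Cmod_triangle_rev 1 (1 - u * c)) as Hge. rewrite Cmod_1 in Hge.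
    replace (1 - u * c - 1)%C with (- (u * c))%C in Hge by ring.
    rewrite Cmod_opp, Cmod_mult in Hge. assert (Cmod u * Cmod c <= Cmod c * rho) by nra. lra. }
  assert (Hnz : (1 - u * c)%C <> RtoC 0) by (intros E; rewrite E, Cmod_0 in Hden; lra).
  split; [exact Hnz |].
  rewrite Cmod_div, !Cmod_mult, Cmod_pow, Cmod_mult by exact Hnz.
  unfold Rdiv. apply Rmult_le_compat.
  - apply Rmult_le_pos; [lra | apply pow_le; nra].
  - left. apply Rinv_0_lt_compat. lra.
  - apply Rmult_le_compat_l; [lra |]. apply pow_incr. split; nra.
  - apply Rinv_le_contravar; lra.
Qed.

Lemma Cmod_Cconj_omega : Cmod (Cconj omega) = / sqrt 2.
Proof. rewrite Cmod_conj. exact Cmod_omega. Qed.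

Lemma one_sub_mul_omega_neq_0 (u : C) : Cmod u < sqrt 2 ->
  (1 - u * omega)%C <> RtoC 0 /\ (1 - u * Cconj omega)%C <> RtoC 0.
Proof.
  intros Hu. pose proof (inv_sqrt2_mul_lt_1 _ Hu) as Hr.
  destruct (geom_tail_bound omega u (Cmod u) 0 (Rle_refl _)) as [Hw _];
    [rewrite Cmod_omega; exact Hr |].
  destruct (geom_tail_bound (Cconj omega) u (Cmod u) 0 (Rle_refl _)) as [Hwc _];
    [rewrite Cmod_Cconj_omega; exact Hr |].
  split; assumption.
Qed.

Lemma atan1_remainder_bound (N : nat) (u : C) (rho : R) : Cmod u <= rho -> rho < sqrt 2 ->
  Cmod (atan1_remainder N u) <= / sqrt 2 * (/ sqrt 2 * rho) ^ N / (1 - / sqrt 2 * rho).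
Proof.
  intros Hu Hrho. pose proof (inv_sqrt2_mul_lt_1 rho Hrho) as Hr.
  destruct (geom_tail_bound (Cconj omega) u rho N Hu) as [_ Bc];
    [rewrite Cmod_Cconj_omega; exact Hr |].
  destruct (geom_tail_bound omega u rho N Hu) as [_ Bo]; [rewrite Cmod_omega; exact Hr |].
  rewrite Cmod_Cconj_omega in Bc. rewrite Cmod_omega in Bo.
  assert (Hi : Cmod (Ci / 2) = / 2).
  { unfold Cdiv.
    rewrite Cmod_mult, Cmod_Ci, Cmod_inv, Cmod_R, Rabs_right by (try (intros E; injection E); lra).
    ring. }
  unfold atan1_remainder. rewrite Cmod_mult, Hi.
  set (A := (Cconj omega * (u * Cconj omega) ^ N / (1 - u * Cconj omega))%C) in *.
  set (B := (omega * (u * omega) ^ N / (1 - u * omega))%C) in *.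
  pose proof (Cmod_triangle A (- B)) as T. rewrite Cmod_opp in T.
  apply Rle_trans with (/ 2 * (Cmod A + Cmod B)); [apply Rmult_le_compat_l; [lra | exact T] | lra].
Qed.

Lemma is_derive_Re_ray (F : C -> C) (w : C) (t0 : R) (l : C) :
  is_Cderive F (RtoC t0 * w)%C l -> is_derive (fun t => Re (F (RtoC t * w)%C)) t0 (Re (w * l)).
Proof.
  rewrite is_Cderive_spec. intros HF. split; [apply is_linear_scal_l |].
  intros t' Ht'. apply (is_filter_lim_locally_unique (K := R_AbsRing) (V := R_NormedModule)) in Ht'.
  subst t'. intros [eps Heps].
  set (W := Cmod w + 1). assert (HW : 0 < W) by (pose proof (Cmod_ge_0 w); unfold W; lra).
  destruct (HF (eps / W)) as [delta [Hdelta Hball]]; [apply Rdiv_lt_0_compat; lra |].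
  exists (mkposreal (delta / W) (Rdiv_lt_0_compat _ _ Hdelta HW)). intros t Ht.
  change (Rabs (t - t0) < delta / W) in Ht.
  change (Rabs (Re (F (RtoC t * w)%C) - Re (F (RtoC t0 * w)%C) - (t - t0) * Re (w * l))
          <= eps * Rabs (t - t0)).
  assert (Hstep : (RtoC t * w - RtoC t0 * w)%C = (RtoC (t - t0) * w)%C)
    by (rewrite RtoC_minus; ring).
  assert (Hmod : Cmod (RtoC t * w - RtoC t0 * w)%C = Rabs (t - t0) * Cmod w)
    by (rewrite Hstep, Cmod_mult, Cmod_R; reflexivity).
  assert (Hsmall : Rabs (t - t0) * Cmod w < delta).
  { apply Rle_lt_trans with (Rabs (t - t0) * W);
      [apply Rmult_le_compat_l; [apply Rabs_pos | unfold W; lra] |].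
    apply (Rmult_lt_reg_r (/ W)); [apply Rinv_0_lt_compat; lra |].
    rewrite Rmult_assoc, Rinv_r, Rmult_1_r by lra. exact Ht. }
  specialize (Hball (RtoC t * w)%C ltac:(rewrite Hmod; exact Hsmall)).
  change (Cmod (F (RtoC t * w) - F (RtoC t0 * w) - (RtoC t * w - RtoC t0 * w) * l)%C
          <= eps / W * Cmod (RtoC t * w - RtoC t0 * w)%C) in Hball.
  rewrite Hmod, Hstep in Hball.
  eapply Rle_trans; [| eapply Rle_trans; [exact Hball |]].
  - eapply Rle_trans; [| apply re_le_Cmod]. right. f_equal. unfold Re. simpl. ring.
  - assert (Hw1 : Cmod w / W <= 1).
    { apply (Rmult_le_reg_r W); [exact HW |]. unfold Rdiv.
      rewrite Rmult_assoc, Rinv_l, Rmult_1_r, Rmult_1_l by lra. unfold W. lra. }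
    replace (eps / W * (Rabs (t - t0) * Cmod w)) with (eps * Rabs (t - t0) * (Cmod w / W))
      by (field; lra).
    pose proof (Rabs_pos (t - t0)). assert (0 <= eps * Rabs (t - t0)) by nra. nra.
Qed.

Lemma Re_sub_le_segment (F F' : C -> C) (w : C) (M : R) :
  (forall t, 0 <= t <= 1 -> is_Cderive F (RtoC t * w)%C (F' (RtoC t * w)%C)) ->
  (forall t, 0 <= t <= 1 -> Cmod (F' (RtoC t * w)%C) <= M) ->
  Rabs (Re (F w) - Re (F (RtoC 0))) <= M * Cmod w.
Proof.
  intros HF HM.
  pose proof (mean_value_ineq (fun t => Re (F (RtoC t * w)%C)) (fun t => Re (w * F' (RtoC t * w)%C))
                0 1 (M * Cmod w)) as MV.
  rewrite Rmin_left, Rmax_right, Rminus_0_r, Rabs_R1, Rmult_1_r in MV by lra.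
  replace (RtoC 1 * w)%C with w in MV by ring. replace (RtoC 0 * w)%C with (RtoC 0) in MV by ring.
  apply MV.
  - intros t Ht. apply is_derive_Re_ray, HF, Ht.
  - intros t Ht. eapply Rle_trans; [apply re_le_Cmod |]. rewrite Cmod_mult, Rmult_comm.
    apply Rmult_le_compat_r; [apply Cmod_ge_0 | apply HM, Ht].
Qed.

Lemma Cmod_sub_le_segment (F F' : C -> C) (w : C) (M : R) :
  (forall t, 0 <= t <= 1 -> is_Cderive F (RtoC t * w)%C (F' (RtoC t * w)%C)) ->
  (forall t, 0 <= t <= 1 -> Cmod (F' (RtoC t * w)%C) <= M) ->
  Cmod (F w - F (RtoC 0))%C <= 2 * (M * Cmod w).
Proof.
  intros HF HM. pose proof (Re_sub_le_segment F F' w M HF HM) as HRe.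
  assert (HIm : Rabs (Im (F w) - Im (F (RtoC 0))) <= M * Cmod w).
  { replace (Im (F w) - Im (F (RtoC 0))) with (Re (- Ci * F w)%C - Re (- Ci * F (RtoC 0))%C)
      by (unfold Re, Im; simpl; ring).
    apply (Re_sub_le_segment (fun z => - Ci * F z)%C (fun z => - Ci * F' z)%C).
    - intros t Ht. apply is_Cderive_scal, HF, Ht.
    - intros t Ht. rewrite Cmod_mult, Cmod_opp, Cmod_Ci, Rmult_1_l. apply HM, Ht. }
  eapply Rle_trans; [apply Cmod_le_abs_Re_Im |].
  change (Rabs (Re (F w) - Re (F (RtoC 0))) + Rabs (Im (F w) - Im (F (RtoC 0)))
          <= 2 * (M * Cmod w)).
  lra.
Qed.

Lemma Catan_0 : Catan (RtoC 0) = RtoC 0.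
Proof.
  unfold Catan. replace (1 - Ci * RtoC 0)%C with (1 + Ci * RtoC 0)%C by ring. ring.
Qed.

Lemma Catan_1 : Catan (RtoC 1) = (PI / 4)%C.
Proof.
  unfold Catan.
  replace (1 - Ci * RtoC 1)%C with ((1, -1) : C) by (apply injective_projections; simpl; ring).
  replace (1 + Ci * RtoC 1)%C with ((1, 1) : C) by (apply injective_projections; simpl; ring).
  unfold Clog. rewrite !Carg_Re_pos by lra.
  replace (Cmod (1, -1)) with (Cmod (1, 1)) by (unfold Cmod; simpl; f_equal; ring).
  replace (atan (-1 / 1)) with (- atan 1) by (rewrite <- atan_opp; f_equal; field).
  rewrite Rdiv_1_r, atan_1. apply injective_projections; simpl; field.
Qed.

Lemma atan1_taylor_at_0 (N : nat) : atan1_taylor N (RtoC 0) = RtoC 0.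
Proof. induction N as [| N IH]; [reflexivity |]. cbn [atan1_taylor]. rewrite IH, Cpow_S. ring. Qed.

Lemma atan_dom_one_plus (u : C) : Cmod u < sqrt 2 -> atan_dom (1 + u)%C.
Proof.
  intros Hu. assert (H2 : Cmod u * Cmod u < 2).
  { pose proof (Cmod_ge_0 u). pose proof sqrt2_pos. pose proof (sqrt_sqrt 2). nra. }
  destruct u as [a b]. rewrite Cmod_sqr in H2. unfold atan_dom; simpl. intros [Ha Hb].
  replace a with (-1) in H2 by lra. replace (0 + b) with b in Hb by ring.
  destruct (Rle_dec 0 b); [rewrite Rabs_right in Hb | rewrite Rabs_left in Hb]; nra.
Qed.

Lemma atan1_taylor_remainder_bound (w : C) (N : nat) : Cmod w < sqrt 2 ->
  Cmod (Catan (1 + w) - PI / 4 - atan1_taylor N w)%C <=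
  2 * (/ sqrt 2 * (/ sqrt 2 * Cmod w) ^ N / (1 - / sqrt 2 * Cmod w) * Cmod w).
Proof.
  intros Hw.
  assert (Hseg : forall t, 0 <= t <= 1 -> Cmod (RtoC t * w)%C <= Cmod w).
  { intros t Ht. rewrite Cmod_mult, Cmod_R, Rabs_right by lra.
    pose proof (Cmod_ge_0 w). nra. }
  replace (Catan (1 + w) - PI / 4 - atan1_taylor N w)%C with
    ((fun u => Catan (1 + u) - PI / 4 - atan1_taylor N u) w -
     (fun u => Catan (1 + u) - PI / 4 - atan1_taylor N u) (RtoC 0))%C
    by (cbv beta; rewrite atan1_taylor_at_0, Cplus_0_r, Catan_1; ring).
  apply (Cmod_sub_le_segment (fun u => Catan (1 + u) - PI / 4 - atan1_taylor N u)%C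
                              (atan1_remainder N)).
  - intros t Ht. set (u := (RtoC t * w)%C). pose proof (Hseg t Ht) as Hu. fold u in Hu.
    assert (Hdom : Cmod u < sqrt 2) by lra.
    destruct (one_sub_mul_omega_neq_0 u Hdom) as [Hw1 Hw2].
    eapply (eq_ind_r (A := C) (is_Cderive _ _)).
    + apply is_Cderive_minus; [apply is_Cderive_minus |].
      * apply (is_Cderive_comp Catan (fun y => 1 + y)%C).
        -- apply is_Cderive_Catan, atan_dom_one_plus, Hdom.
        -- apply is_Cderive_plus; [apply is_Cderive_const | apply is_Cderive_id].
      * apply is_Cderive_const.
      * apply is_Cderive_atan1_taylor.
    + rewrite atan1_taylor_deriv_eq by assumption. cbv beta. ring.
  - intros t Ht. apply atan1_remainder_bound; [apply Hseg, Ht | exact Hw].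
Qed.

(** * The series of [Catan z / z] *)

Lemma is_series_C_of_bound (a : nat -> C) (l : C) (b : nat -> R) :
  (forall N, Cmod (sum_n a N - l)%C <= b N) -> is_lim_seq b 0 -> is_series a l.
Proof.
  intros Hb Hlim. apply is_lim_seq_spec in Hlim.
  intros P [eps HP]. destruct (Hlim eps) as [N0 HN0]. exists N0. intros N HN.
  apply HP, C_NormedModule_mixin_compat1. eapply Rle_lt_trans; [apply Hb |].
  specialize (HN0 N HN). rewrite Rminus_0_r in HN0.
  eapply Rle_lt_trans; [apply Rle_abs | exact HN0].
Qed.

Lemma is_lim_seq_succ_mul_pow (q : R) : 0 <= q < 1 -> is_lim_seq (fun n => INR (S n) * q ^ n) 0.
Proof.
  intros Hq.
  (* [(n + 1) q^n] is the general term of the derived geometric series *)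
  assert (Hrad : CV_radius (fun _ : nat => 1) = 1).
  { rewrite (CV_radius_finite_DAlembert _ 1); [now rewrite Rinv_1 | intros _; lra | lra |].
    apply is_lim_seq_ext with (fun _ => 1); [intros n; rewrite Rdiv_1_r, Rabs_R1; reflexivity |].
    apply is_lim_seq_const. }
  assert (Hser := ex_pseries_derive (fun _ : nat => 1) q).
  rewrite Hrad in Hser. specialize (Hser ltac:(simpl; rewrite Rabs_right; lra)).
  apply ex_series_lim_0 in Hser.
  apply is_lim_seq_ext with (2 := Hser). intros n.
  unfold PS_derive. rewrite pow_n_pow. change (q ^ n * (INR (S n) * 1) = INR (S n) * q ^ n). ring.
Qed.

Definition atan_over_coef (n : nat) : C := ((-1) ^ n * (PI / 4 + T n))%C.

Lemma atan_over_coef_real (n : nat) : atan_over_coef n = RtoC ((-1) ^ n * (PI / 4 + T n)).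
Proof.
  unfold atan_over_coef. rewrite RtoC_mult, RtoC_plus, RtoC_div, RtoC_pow by lra. reflexivity.
Qed.

Lemma neg_1_pow_sqr (n : nat) : (-1) ^ n * (-1) ^ n = 1.
Proof. rewrite <- Rpow_mult_distr. replace (-1 * -1) with 1 by ring. apply pow1. Qed.

Lemma atan_over_coef_succ (n : nat) :
  (atan_over_coef n + atan_over_coef (S n))%C = RtoC (atan1_coef (S n)).
Proof.
  rewrite !atan_over_coef_real, <- RtoC_plus, T_succ. f_equal.
  simpl pow. transitivity (atan1_coef (S n) * ((-1) ^ n * (-1) ^ n)); [ring |].
  rewrite neg_1_pow_sqr. ring.
Qed.

Lemma atan1_taylor_at_m1 (N : nat) : atan1_taylor N (-1)%C = RtoC (T N).
Proof.
  induction N as [| N IH]; [reflexivity |].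
  cbn [atan1_taylor]. rewrite IH, T_succ, <- RtoC_pow, <- RtoC_mult, <- RtoC_plus. f_equal. ring.
Qed.

Lemma PI4_plus_T_bound (N : nat) :
  Rabs (PI / 4 + T N) <= 2 * / sqrt 2 / (1 - / sqrt 2) * (/ sqrt 2) ^ N.
Proof.
  assert (Hm1 : Cmod (-1)%C = 1) by (rewrite Cmod_R, Rabs_left; lra).
  pose proof (atan1_taylor_remainder_bound (-1)%C N) as Hb. rewrite Hm1, !Rmult_1_r in Hb.
  specialize (Hb one_lt_sqrt2).
  replace (1 + -1)%C with (RtoC 0) in Hb by ring. rewrite Catan_0, atan1_taylor_at_m1 in Hb.
  replace (RtoC 0 - PI / 4 - T N)%C with (RtoC (- (PI / 4 + T N))) in Hb
    by (rewrite RtoC_opp, RtoC_plus, RtoC_div by lra; ring).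
  rewrite Cmod_R, Rabs_Ropp in Hb. eapply Rle_trans; [exact Hb |].
  pose proof one_lt_sqrt2. right. field. split; lra.
Qed.

Lemma atan_over_partial_sum (w : C) (N : nat) :
  ((1 + w) * sum_n (fun n => atan_over_coef n * w ^ n) N)%C =
  (PI / 4 + atan1_taylor N w + atan_over_coef N * w ^ S N)%C.
Proof.
  induction N as [| N IH].
  - rewrite sum_O. unfold atan_over_coef. cbn [T Cpow atan1_taylor]. field.
  - rewrite sum_Sn. change (@plus C_AbelianMonoid) with Cplus.
    rewrite Cmult_plus_distr_l, IH. cbn [atan1_taylor]. rewrite <- atan_over_coef_succ, !Cpow_S.
    generalize (w ^ N)%C. intros c. ring.
Qed.

Lemma atan_over_coef_mul_sign (n : nat) : (atan_over_coef n * (-1) ^ n)%C = RtoC (PI / 4 + T n).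
Proof.
  rewrite atan_over_coef_real, <- RtoC_pow, <- RtoC_mult. f_equal.
  transitivity ((PI / 4 + T n) * ((-1) ^ n * (-1) ^ n)); [ring |].
  rewrite neg_1_pow_sqr. ring.
Qed.

(* Summation by parts at [z = 0], where [1 + w] vanishes. *)
Lemma atan_over_partial_sum_at_m1 (N : nat) :
  sum_n (fun n => atan_over_coef n * (-1) ^ n)%C N =
  (atan1_taylor_deriv N (-1) + RtoC (INR (S N) * (PI / 4 + T N)))%C :> C.
Proof.
  induction N as [| N IH].
  - rewrite sum_O, atan_over_coef_mul_sign. cbn [atan1_taylor_deriv].
    simpl INR. rewrite Rmult_1_l. ring.
  - rewrite sum_Sn. change (@plus C_AbelianMonoid) with Cplus.
    rewrite IH, atan_over_coef_mul_sign. cbn [atan1_taylor_deriv].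
    rewrite <- RtoC_pow, <- RtoC_mult.
    assert (Hr : INR (S N) * (PI / 4 + T N) + (PI / 4 + T (S N)) =
                 Im (omega ^ S N) * (-1) ^ N + INR (S (S N)) * (PI / 4 + T (S N))).
    { rewrite T_succ. unfold atan1_coef. rewrite (S_INR (S N)). simpl pow.
      field. apply not_0_INR. lia. }
    rewrite <- Cplus_assoc, <- RtoC_plus, Hr, RtoC_plus. ring.
Qed.

Lemma is_lim_seq_scal_pow (c q : R) : 0 <= q < 1 -> is_lim_seq (fun n => c * q ^ n) 0.
Proof.
  intros Hq. replace (Finite 0) with (Rbar_mult c 0) by (simpl; f_equal; ring).
  apply is_lim_seq_scal_l, is_lim_seq_geom. rewrite Rabs_right; lra.
Qed.

Lemma atan_over_partial_sum_sub (z : C) (N : nat) : z <> RtoC 0 ->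
  (sum_n (fun n => atan_over_coef n * (z - 1) ^ n) N - Catan z / z)%C =
  ((atan_over_coef N * (z - 1) ^ S N - (Catan z - PI / 4 - atan1_taylor N (z - 1))) / z)%C.
Proof.
  intros Hz.
  assert (Hp : sum_n (fun n => atan_over_coef n * (z - 1) ^ n)%C N =
    ((PI / 4 + atan1_taylor N (z - 1) + atan_over_coef N * (z - 1) ^ S N) / z)%C :> C).
  { rewrite <- atan_over_partial_sum. replace (1 + (z - 1))%C with z by ring.
    generalize (sum_n (fun n => atan_over_coef n * (z - 1) ^ n)%C N). intros S. change C in S.
    field. exact Hz. }
  rewrite Hp. field. exact Hz.
Qed.

Lemma atan_over_series_neq_0 (z : C) : Cmod (z - 1) < sqrt 2 -> z <> RtoC 0 ->
  is_series (fun n => atan_over_coef n * (z - 1) ^ n)%C (Catan z / z)%C.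
Proof.
  intros Hw Hz. set (w := (z - 1)%C) in *. set (q := / sqrt 2 * Cmod w).
  assert (Hz1 : z = (1 + w)%C) by (unfold w; ring).
  assert (Hmz : 0 < Cmod z) by (apply Cmod_gt_0, Hz).
  pose proof (Cmod_ge_0 w) as Hw0. pose proof sqrt2_pos as Hs.
  assert (Hq : 0 <= q < 1).
  { split; [apply Rmult_le_pos; [left; apply Rinv_0_lt_compat |] | apply inv_sqrt2_mul_lt_1]; lra. }
  set (K0 := 2 * / sqrt 2 / (1 - / sqrt 2)).
  set (K := (K0 * Cmod w + 2 * / sqrt 2 / (1 - q) * Cmod w) / Cmod z).
  apply (is_series_C_of_bound _ _ (fun N => K * q ^ N)); [| apply is_lim_seq_scal_pow, Hq].
  intros N.
  assert (Hc : Cmod (atan_over_coef N * w ^ S N) <= K0 * Cmod w * q ^ N).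
  { rewrite Cmod_mult, atan_over_coef_real, Cmod_R, Rabs_mult, pow_1_abs, Rmult_1_l, Cmod_pow.
    unfold q. rewrite Rpow_mult_distr. simpl pow.
    pose proof (PI4_plus_T_bound N) as HP. pose proof (pow_le (Cmod w) N Hw0) as Hpow.
    fold K0 in HP. replace (K0 * Cmod w * ((/ sqrt 2) ^ N * Cmod w ^ N))
      with (K0 * (/ sqrt 2) ^ N * (Cmod w * Cmod w ^ N)) by ring.
    apply Rmult_le_compat_r; [nra | exact HP]. }
  assert (Hr : Cmod (Catan z - PI / 4 - atan1_taylor N w)
               <= 2 * / sqrt 2 / (1 - q) * Cmod w * q ^ N).
  { rewrite Hz1. eapply Rle_trans; [apply atan1_taylor_remainder_bound, Hw |]. fold q.
    right. field. lra. }
  unfold w. rewrite atan_over_partial_sum_sub, Cmod_div by exact Hz. fold w.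
  pose proof (Cmod_triangle (atan_over_coef N * w ^ S N) (- (Catan z - PI / 4 - atan1_taylor N w)))
    as Htri.
  rewrite Cmod_opp in Htri.
  apply Rle_trans with ((K0 * Cmod w * q ^ N + 2 * / sqrt 2 / (1 - q) * Cmod w * q ^ N) / Cmod z).
  - unfold Rdiv. apply Rmult_le_compat_r; [left; apply Rinv_0_lt_compat, Hmz |].
    eapply Rle_trans; [exact Htri | lra].
  - right. unfold K. field. lra.
Qed.

Lemma atan_over_series_0 : is_series (fun n => atan_over_coef n * (0 - 1) ^ n)%C (RtoC 1).
Proof.
  apply (is_series_ext (fun n => atan_over_coef n * (-1) ^ n)%C).
  { intros n. replace (0 - 1)%C with (RtoC (-1)) by ring. reflexivity. }
  pose proof sqrt2_pos as Hs. pose proof inv_sqrt2_lt_1 as Hs1.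
  set (r := / sqrt 2) in *. assert (Hr : 0 < r) by (apply Rinv_0_lt_compat, Hs).
  set (K0 := 2 * r / (1 - r)).
  set (K := r / (1 - r) + K0).
  apply (is_series_C_of_bound _ _ (fun N => K * (INR (S N) * r ^ N))).
  2: { replace (Finite 0) with (Rbar_mult K 0) by (simpl; f_equal; ring).
       apply is_lim_seq_scal_l, is_lim_seq_succ_mul_pow. lra. }
  intros N.
  assert (Hm1 : Cmod (-1)%C <= 1) by (rewrite Cmod_R, Rabs_left; lra).
  destruct (one_sub_mul_omega_neq_0 (-1)%C) as [Hw1 Hw2]; [pose proof one_lt_sqrt2; lra |].
  pose proof (atan1_remainder_bound N (-1)%C 1 Hm1 one_lt_sqrt2) as HR. fold r in HR.
  rewrite !Rmult_1_r in HR.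
  assert (HP : Rabs (INR (S N) * (PI / 4 + T N)) <= INR (S N) * (K0 * r ^ N)).
  { rewrite Rabs_mult, Rabs_right by (apply Rle_ge, pos_INR).
    apply Rmult_le_compat_l; [apply pos_INR | apply PI4_plus_T_bound]. }
  rewrite atan_over_partial_sum_at_m1, atan1_taylor_deriv_eq by assumption.
  replace (/ (1 + (1 + -1) * (1 + -1)) - atan1_remainder N (-1)
           + RtoC (INR (S N) * (PI / 4 + T N)) - 1)%C
    with (- atan1_remainder N (-1) + RtoC (INR (S N) * (PI / 4 + T N)))%C by field.
  eapply Rle_trans; [apply Cmod_triangle |]. rewrite Cmod_opp, Cmod_R.
  assert (Hpow : r ^ N <= INR (S N) * r ^ N).
  { rewrite S_INR. pose proof (pos_INR N). pose proof (pow_le r N (Rlt_le _ _ Hr)). nra. }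
  assert (Hrr : r * r ^ N / (1 - r) = r / (1 - r) * r ^ N) by (field; lra).
  assert (0 <= r / (1 - r)) by (apply Rdiv_le_0_compat; lra).
  unfold K. nra.
Qed.

Theorem theorem3p1 :
  (forall (n : nat) (z : C), (1 <= n)%nat -> atan_dom z -> z <> 0%C ->
     is_nth_cderive atan_dom Catan n z
       (INR (Factorial.fact (n - 1)) / Cpow (2 * z) (n - 1) *
        sum_n (fun k : nat =>
          (-1) ^ k * INR (binom k (n - k - 1)) * Cpow (2 * z) (2 * k)
            / Cpow (1 + z * z) (k + 1)) (n - 1))%C)
  /\
  (forall z : C, Cmod (z - 1) < sqrt 2 ->
     is_series (fun n : nat =>
       ((-1) ^ n * (PI / 4 + T n)) * Cpow (z - 1) n)%C (atan_over z)).
Proof.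
  split.
  - intros n z Hn Hz Hz0. exists Catan_deriv. split; [| split].
    + intros w _. reflexivity.
    + intros k w Hw. apply is_Cderive_Catan_deriv, Hw.
    + apply Catan_deriv_closed_form; assumption.
  - intros z Hz. unfold atan_over. destruct (Ceq_dec z 0) as [-> | Hz0].
    + exact atan_over_series_0.
    + exact (atan_over_series_neq_0 z Hz Hz0).
Qed.
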